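(* Let $a\in K$ and let $b_1,\dots,b_\ell\in K$ be distinct ($\ell\ge1$). Suppose that either $(a,b_i)\in S$ for all $i$, or $(b_i,a)\in S$ for all $i$. Then $\pi\ge\ell(n-2q-m+1)+q-m-1$.
   Context: $G$ is a set of size $n$ and $G(\circ)$, $G(\ast)$ are distinct groups on $G$ with the same identity element. $\mathrm{diff}(\circ,\ast)=\{(a,b):a\circ b\ne a\ast b\}$, $\mathrm{dist}(\circ,\ast)=|\mathrm{diff}(\circ,\ast)|$, $\mathrm{dist}_a=|\{b:a\circ b\ne a\ast b\}|$; $H=\{a:\mathrm{dist}_a=0\}$, $h=|H|$; $K=\{a:\mathrm{dist}_a<n/3\}$, $k=|K|$; $m=\min\{\mathrm{dist}_a:\mathrm{dist}_a>0\}$. Standing assumption: $m\ge 3$. Let $q=\lceil n/3\rceil$ and the profit $\pi=\mathrm{dist}(\circ,\ast)-((k-h)m+(n-k)q)$. Let $S=\{(a,b)\in\mathrm{diff}(\circ,\ast):a,b\in K,\ a\ne b\}$, $s=|S|$. *)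

From HB Require Import structures.
From mathcomp Require Import all_boot all_order all_algebra.
Set Implicit Arguments. Unset Strict Implicit. Unset Printing Implicit Defensive.

Section GroupDist.
Variable T : finType.

Definition is_group (op : T -> T -> T) (e : T) : Prop :=
  associative op /\ left_id e op /\ right_id e op /\
  (forall x, exists y, op y x = e /\ op x y = e).

Variables (op1 op2 : T -> T -> T).

Definition diffset : {set T * T} :=
  [set p : T * T | op1 p.1 p.2 != op2 p.1 p.2].
Definition dist : nat := #|diffset|.
Definition dista (a : T) : nat := #|[set b : T | op1 a b != op2 a b]|.
Definition Hset : {set T} := [set a : T | dista a == 0%N].
Definition hh : nat := #|Hset|.
(* K = {a : dist_a < n/3}, i.e. 3 * dist_a < n *)
Definition Kset : {set T} := [set a : T | 3 * dista a < #|T|].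
Definition kk : nat := #|Kset|.
(* m = min {dist_a : dist_a > 0}; default #|T| is irrelevant when the
   groups are distinct since dist_a <= #|T| *)
Definition mm : nat := \big[minn/#|T|]_(a | 0 < dista a) dista a.
(* q = ceil(n/3) *)
Definition qq : nat := (#|T| + 2) %/ 3.
Definition profit : int :=
  (dist%:Z - (((kk%:Z - hh%:Z) * mm%:Z) + ((#|T|%:Z - kk%:Z) * qq%:Z)))%R.
Definition Sset : {set T * T} :=
  [set p : T * T | [&& p \in diffset, p.1 \in Kset, p.2 \in Kset & p.1 != p.2]].

End GroupDist.

From HB Require Import structures.
From mathcomp Require Import all_boot all_order all_algebra.
From mathcomp Require Import zify.
Import Order.TTheory GRing.Theory Num.Theory.

(* The profit splits as a sum over x of dist_x minus a charge (0 on H, m on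
   K \ H, q outside K), and every summand is nonnegative.  If u o v <> u * v,
   no x can have (u o v) x, v x and u (v x) all computed alike by both laws:
   associativity and cancelling x would give u o v = u * v.  Hence
   n <= dist_(u o v) + dist_u + dist_v.  For the pairs (a, b_i) this puts the
   distinct elements c_i = a o b_i (or b_i o a) outside K, and summing the
   profit terms of a, the b_i and the c_i gives the bound. *)

Section GroupCancel.
Context {T : finType} {op : T -> T -> T} {e : T}.
Hypothesis G : is_group op e.

Lemma is_group_opI x : injective (op x).
Proof.
case: G => opA [op1x [_ inv]] y z eq_xy_xz; case: (inv x) => w [wx _].
by rewrite -(op1x y) -(op1x z) -wx -!opA eq_xy_xz.
Qed.

Lemma is_group_opIr x : injective (op^~ x).
Proof.
case: G => opA [_ [opx1 inv]] y z eq_yx_zx; case: (inv x) => w [_ xw].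
by rewrite -(opx1 y) -(opx1 z) -xw !opA eq_yx_zx.
Qed.

End GroupCancel.

Section Profit.
Context {T : finType} {op1 op2 : T -> T -> T} {e : T}.
Hypotheses (G1 : is_group op1 e) (G2 : is_group op2 e).

Local Notation dA := (dista op1 op2).
Local Notation K := (Kset op1 op2).
Local Notation H := (Hset op1 op2).
Local Notation m := (mm op1 op2).
Local Notation q := (qq T).

Lemma card_le_dista_op u v : op1 u v != op2 u v ->
  #|T| <= dA (op1 u v) + dA u + dA v.
Proof.
move=> neq_uv; set c := op1 u v.
set X := [set x | op1 c x != op2 c x].
set Y := [set x | op1 v x != op2 v x].
set Du := [set y | op1 u y != op2 u y].
have cardDu : #|op1 v @^-1: Du| = dA u by rewrite card_preimset //; exact: is_group_opI G1 v.
have coverXC : ~: X \subset Y :|: op1 v @^-1: Du.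
  apply/subsetP => x; rewrite !inE negbK => /eqP cx_eq.
  apply: contraR neq_uv; rewrite negb_or !negbK => /andP [/eqP vx_eq /eqP uvx_eq].
  apply/eqP; apply: (is_group_opIr G2 x).
  case: G1 => opA1 _; case: G2 => opA2 _.
  by rewrite -cx_eq -opA1 uvx_eq vx_eq opA2.
have := cardsC X; have := subset_leq_card coverXC; have := cardsU Y (op1 v @^-1: Du).
rewrite cardDu /dista -/X -/Y; lia.
Qed.

Definition charge (x : T) : nat := if x \in H then 0 else if x \in K then m else q.

Definition profit_term (x : T) : int := ((dA x)%:Z - (charge x)%:Z)%R.

Lemma Hset_subset_Kset : H \subset K.
Proof.
apply/subsetP => x; rewrite !inE => /eqP ->; rewrite muln0.
by apply/card_gt0P; exists x.
Qed.

Lemma dist_sum : dist op1 op2 = \sum_x dA x.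
Proof.
under eq_bigr do rewrite /dista -sum1dep_card.
by rewrite pair_big_dep /dist /diffset -sum1dep_card.
Qed.

Lemma sum_charge : \sum_x charge x = #|K :\: H| * m + #|~: K| * q.
Proof.
rewrite (bigID (mem K)) /= -!sum_nat_const; congr (_ + _).
- rewrite (bigID (mem H)) /= big1 => [|x /andP [_ xH]]; last by rewrite /charge xH.
  apply: eq_big => [x|x /andP [xK xH]]; first by rewrite !inE andbC.
  by rewrite /charge (negbTE xH) xK.
- apply: eq_big => [x|x xK]; first by rewrite !inE.
  have xH : x \notin H by apply: contra xK; exact: (subsetP Hset_subset_Kset).
  by rewrite /charge (negbTE xH) (negbTE xK).
Qed.

Lemma profit_sum : profit op1 op2 = (\sum_x profit_term x)%R.
Proof.
rewrite /profit_term sumrB -!(big_morph _ PoszD (erefl (Posz 0))) -dist_sum sum_charge.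
rewrite cardsD (setIidPr Hset_subset_Kset).
have := subset_leq_card Hset_subset_Kset; have := cardsC K.
rewrite /profit /kk /hh; nia.
Qed.

Lemma profit_term_ge0 x : (0 <= profit_term x)%R.
Proof.
rewrite /profit_term /charge subr_ge0 lez_nat.
case: ifP => [//|/negbT]; rewrite inE -lt0n => dA_gt0.
case: ifP => [_|]; first exact: (@bigmin_le_cond _ nat).
by rewrite inE /qq => /negbT; lia.
Qed.

Lemma profit_term_Kset {x : T} : x \in K -> ((dA x)%:Z - m%:Z <= profit_term x)%R.
Proof. by rewrite /profit_term /charge => ->; case: ifP => _; lia. Qed.

Lemma profit_term_notin_Kset {x : T} : x \notin K -> profit_term x = ((dA x)%:Z - q%:Z)%R.
Proof.
move=> xK; have xH : x \notin H by apply: contra xK; exact: (subsetP Hset_subset_Kset).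
by rewrite /profit_term /charge (negbTE xH) (negbTE xK).
Qed.

Lemma sum_profit_term_le (A : {set T}) : (\sum_(x in A) profit_term x <= profit op1 op2)%R.
Proof.
rewrite profit_sum [X in (_ <= X)%R](bigID (mem A)) /= lerDl.
by apply: sumr_ge0 => x _; exact: profit_term_ge0.
Qed.

Lemma dista_cover_notin_Kset {x y z : T} : x \in K -> y \in K ->
  #|T| <= dA z + dA x + dA y -> z \notin K.
Proof. rewrite !inE; lia. Qed.

Lemma profit_ge_pairs a l (b c : 'I_l -> T) :
  0 < l -> a \in K -> (forall i, b i \in K) -> injective b -> injective c ->
  (forall i, a != b i) -> (forall i, #|T| <= dA (c i) + dA a + dA (b i)) ->
  (l%:Z * (#|T|%:Z - 2 * q%:Z - m%:Z + 1) + q%:Z - m%:Z - 1 <= profit op1 op2)%R.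
Proof.
move=> l_gt0 aK bK b_inj c_inj a_neq_b cover.
have cK i : c i \notin K := dista_cover_notin_Kset aK (bK i) (cover i).
set B := b @: [set: 'I_l]; set C := c @: [set: 'I_l].
have aBC : a \notin B :|: C.
  rewrite in_setU; apply/norP; split; apply/imsetP => -[i _ a_eq].
    by move: (a_neq_b i); rewrite a_eq eqxx.
  by move: (cK i); rewrite -a_eq aK.
have disjBC : [disjoint B & C].
  rewrite disjoints_subset; apply/subsetP => _ /imsetP [i _ ->].
  rewrite inE; apply/negP => /imsetP [j _ bc_eq].
  by move: (cK j); rewrite -bc_eq bK.
have sum_star : (\sum_(x in a |: (B :|: C)) profit_term x =
    profit_term a + \sum_(i in [set: 'I_l]) (profit_term (b i) + profit_term (c i)))%R.
  rewrite big_setU1 //= (eq_bigl [predU B & C]) => [|x]; last by rewrite !inE.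
  rewrite bigU //= !big_imset => [|i j _ _|i j _ _];
    [by rewrite -big_split | exact: c_inj | exact: b_inj].
have sum_pairs : (\sum_(i in [set: 'I_l]) (#|T|%:Z - (dA a)%:Z - m%:Z - q%:Z)
    <= \sum_(i in [set: 'I_l]) (profit_term (b i) + profit_term (c i)))%R.
  apply: ler_sum => i _; have := profit_term_Kset (bK i).
  rewrite (profit_term_notin_Kset (cK i)); have := cover i; lia.
move: sum_pairs; rewrite sumr_const cardsT card_ord -mulr_natr natz.
have := sum_profit_term_le (a |: (B :|: C)); rewrite sum_star.
have := profit_term_Kset aK.
have dA_lt_q : dA a < q by move: aK; rewrite inE /qq; lia.
(* Together the bounds give l (n - m - q) - m - (l - 1) dA a; now use dA a <= q - 1. *)
have : (0 <= (l%:Z - 1) * (q%:Z - 1 - (dA a)%:Z))%R by apply: mulr_ge0; lia.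
nia.
Qed.

End Profit.

Theorem lemma9p4 (T : finType) (op1 op2 : T -> T -> T) (e : T)
  (G1 : is_group op1 e) (G2 : is_group op2 e)
  (distinct : exists a b : T, op1 a b != op2 a b)
  (m_ge3 : 3 <= mm op1 op2)
  (a : T) (l : nat) (b : 'I_l -> T)
  (l_pos : 0 < l)
  (aK : a \in Kset op1 op2)
  (bK : forall i, b i \in Kset op1 op2)
  (b_inj : injective b)
  (hS : (forall i, (a, b i) \in Sset op1 op2) \/
        (forall i, (b i, a) \in Sset op1 op2)) :
  (l%:Z * (#|T|%:Z - 2 * (qq T)%:Z - (mm op1 op2)%:Z + 1)
     + (qq T)%:Z - (mm op1 op2)%:Z - 1 <= profit op1 op2)%R.
Proof.
have Sset_diff x y : (x, y) \in Sset op1 op2 -> op1 x y != op2 x y /\ x != y.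
  by rewrite !inE => /and4P [].
case: hS => hS.
- apply: (profit_ge_pairs a l b (fun i => op1 a (b i))) => //.
  + by move=> i j /(is_group_opI G1) /b_inj.
  + by move=> i; case: (Sset_diff _ _ (hS i)).
  + by move=> i; case: (Sset_diff _ _ (hS i)) => /(card_le_dista_op G1 G2).
- apply: (profit_ge_pairs a l b (fun i => op1 (b i) a)) => //.
  + by move=> i j /(is_group_opIr G1) /b_inj.
  + by move=> i; case: (Sset_diff _ _ (hS i)) => _; rewrite eq_sym.
  + by move=> i; case: (Sset_diff _ _ (hS i)) => /(card_le_dista_op G1 G2); rewrite addnAC.
Qed.
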